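(* Fix $0<B<1$ and $H>0$, and let $\beta(s)=(x(s),0,z(s))$ be the curve with $$x(s)=\frac1H\sqrt{1+B^2+2B\sin\!\big(Hs+\tfrac{3\pi}{2}\big)},\qquad z(s)=\int_{3\pi/(2H)}^{\,s+3\pi/(2H)}\frac{1+B\sin(Ht)}{\sqrt{1+B^2+2B\sin(Ht)}}\,dt .$$ Then $\beta$ is parametrized by arc length and $z'(s)>0$ for all $s$. Let $s_0>0$ be the smallest positive value with $x''(s_0)=0$ (so $\cos(Hs_0)=B$, i.e. $s_0=\frac1H\arccos B$), and let $g:[-s_0,s_0]\to\mathbb R$, $g(s)=x(s)-\frac{x'(s)}{z'(s)}z(s)$. Then: (i) $g(0)=\frac{1-B}{H}>0$; (ii) $g'(0)=g'(s_0)=0$; (iii) $g$ is increasing on $(-s_0,0)$ and decreasing on $(0,s_0)$.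
   Context: Rotating $\beta$ about the $z$-axis gives a Delaunay unduloid (embedded complete surface of revolution with constant mean curvature $H$, where mean curvature is the unnormalized sum of principal curvatures) whose neck lies in the plane $z=0$ at $s=0$. *)

From Stdlib Require Import Reals Lra ClassicalEpsilon.
Open Scope R_scope.

(* Oriented Riemann integral of f from a to b (Stdlib's RiemannInt is oriented:
   for b < a it is minus the integral from b to a).  Defined by choice as the
   value of RiemannInt for any integrability proof (RiemannInt is
   proof-irrelevant); only used for continuous integrands, which are integrable. *)
Definition RInt (f : R -> R) (a b : R) : R :=
  epsilon (inhabits 0) (fun v => exists pr : Riemann_integrable f a b, RiemannInt pr = v).

Definition xcoord (B H s : R) : R :=
  / H * sqrt (1 + B ^ 2 + 2 * B * sin (H * s + 3 * PI / 2)).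

Definition zintegrand (B H t : R) : R :=
  (1 + B * sin (H * t)) / sqrt (1 + B ^ 2 + 2 * B * sin (H * t)).

Definition zcoord (B H s : R) : R :=
  RInt (zintegrand B H) (3 * PI / (2 * H)) (s + 3 * PI / (2 * H)).

Definition s0 (B H : R) : R := acos B / H.

Definition gfun (B H : R) (dx dz : R -> R) (s : R) : R :=
  xcoord B H s - dx s / dz s * zcoord B H s.

From Pilot Require Import Defs.
From Stdlib Require Import Reals Lra Psatz ClassicalEpsilon FunctionalExtensionality.
From Coquelicot Require Import Coquelicot.
Open Scope R_scope.

(* With c = cos(Hs) and D = 1 + B^2 - 2Bc > 0, the identity sin(t + 3π/2) = -cos t
   gives x = √D / H, and the fundamental theorem of calculus gives z' as the
   integrand at s + 3π/(2H).  Hence x' = B sin(Hs)/√D, z' = (1 - Bc)/√D and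
   x'' = BH(c - B)(1 - Bc)/√D^3, so x'^2 + z'^2 = 1 and z' > 0 are algebraic.
   The key point is x' = Q z' with Q = B sin(Hs)/(1 - Bc): by the envelope rule
   (x - Q z)' = -Q' z, where Q' = BH(c - B)/(1 - Bc)^2.  On (-s0, s0) we have
   c > B, so Q' > 0, and z, increasing with z(0) = 0, has the sign of s.  Thus
   g' vanishes at 0 and s0, is positive on (-s0, 0) and negative on (0, s0),
   and the mean value theorem gives (iii). *)

Lemma RInt_of_continuous (f : R -> R) (a b : R) :
  (forall t, continuous f t) -> Defs.RInt f a b = Coquelicot.RInt.RInt f a b.
Proof.
  intros hc.
  assert (pr : Riemann_integrable f a b).
  { apply ex_RInt_Reals_0, (ex_RInt_continuous (V := R_CompleteNormedModule)).
    intros; apply hc. }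
  unfold Defs.RInt.
  destruct (epsilon_spec (inhabits 0)
              (fun v => exists pr : Riemann_integrable f a b, RiemannInt pr = v))
    as [pr' E].
  { exists (RiemannInt pr). now exists pr. }
  rewrite <- E. symmetry. apply RInt_Reals.
Qed.

Lemma derivable_shifted_integral (f : R -> R) (c s : R) :
  (forall t, continuous f t) ->
  derivable_pt_lim (fun u => Defs.RInt f c (u + c)) s (f (s + c)).
Proof.
  intros hc. apply is_derive_Reals.
  apply (is_derive_ext (fun u => Coquelicot.RInt.RInt f c (u + c))).
  { intros u. symmetry. now apply RInt_of_continuous. }
  replace (f (s + c)) with (scal 1 (f (s + c)))
    by (unfold scal; simpl; unfold mult; simpl; ring).
  apply (is_derive_comp (fun u => Coquelicot.RInt.RInt f c u) (fun u => u + c)).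
  - apply is_derive_RInt with (a := c); [|apply hc].
    apply filter_forall. intros u.
    apply (RInt_correct (V := R_CompleteNormedModule)),
          (ex_RInt_continuous (V := R_CompleteNormedModule)).
    intros; apply hc.
  - auto_derive; auto.
Qed.

Lemma derivative_fun_unique (f d1 d2 : R -> R) :
  (forall s, derivable_pt_lim f s (d1 s)) ->
  (forall s, derivable_pt_lim f s (d2 s)) -> d1 = d2.
Proof.
  intros h1 h2. apply functional_extensionality. intros s.
  exact (uniqueness_limite _ _ _ _ (h1 s) (h2 s)).
Qed.

Lemma strictly_increasing_on (f f' : R -> R) (lo hi : R) :
  (forall s, lo < s < hi -> derivable_pt_lim f s (f' s)) ->
  (forall s, lo < s < hi -> 0 < f' s) ->
  forall a b, lo < a -> a < b -> b < hi -> f a < f b.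
Proof.
  intros hd hpos a b ha hab hb.
  destruct (MVT_cor2 f f' a b hab) as [c [Ec hc]].
  { intros c hc. apply hd. lra. }
  pose proof (hpos c ltac:(lra)). nra.
Qed.

Lemma strictly_decreasing_on (f f' : R -> R) (lo hi : R) :
  (forall s, lo < s < hi -> derivable_pt_lim f s (f' s)) ->
  (forall s, lo < s < hi -> f' s < 0) ->
  forall a b, lo < a -> a < b -> b < hi -> f b < f a.
Proof.
  intros hd hneg a b ha hab hb.
  enough (- f a < - f b) by lra.
  apply (strictly_increasing_on (- f)%F (fun s => - f' s) lo hi); auto.
  - intros s hs. now apply derivable_pt_lim_opp, hd.
  - intros s hs. pose proof (hneg s hs). lra.
Qed.

Lemma sign_of_increasing_through_zero (f f' : R -> R) :
  (forall s, derivable_pt_lim f s (f' s)) -> (forall s, 0 < f' s) -> f 0 = 0 ->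
  forall s, (0 < s -> 0 < f s) /\ (s < 0 -> f s < 0).
Proof.
  intros hd hpos h0 s.
  pose proof (strictly_increasing_on f f' (- Rabs s - 1) (Rabs s + 1)
                (fun t _ => hd t) (fun t _ => hpos t)) as hinc.
  pose proof (Rle_abs s). pose proof (Rle_abs (- s)). rewrite Rabs_Ropp in *.
  split; intros hs; rewrite <- h0; apply hinc; lra.
Qed.

Lemma derivable_envelope (x z q : R -> R) (s dx dz dq : R) :
  derivable_pt_lim x s dx -> derivable_pt_lim z s dz -> derivable_pt_lim q s dq ->
  dx = q s * dz ->
  derivable_pt_lim (fun t => x t - q t * z t) s (- dq * z s).
Proof.
  intros hx hz hq hslope.
  replace (- dq * z s) with (dx - (dq * z s + q s * dz)) by (rewrite hslope; ring).
  apply (derivable_pt_lim_minus x (fun t => q t * z t)); auto.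
  now apply (derivable_pt_lim_mult q z).
Qed.

Lemma sin_shift_3PI2 (t : R) : sin (t + 3 * PI / 2) = - cos t.
Proof.
  replace (3 * PI / 2) with (3 * (PI / 2)) by field.
  rewrite sin_plus, cos_3PI2, sin_3PI2. ring.
Qed.

(* Closed forms attached to the profile curve; D is H^2 x^2. *)
Definition D (B H s : R) : R := 1 + B ^ 2 - 2 * B * cos (H * s).
Definition dX (B H s : R) : R := B * sin (H * s) / sqrt (D B H s).
Definition dZ (B H s : R) : R := (1 - B * cos (H * s)) / sqrt (D B H s).
Definition ddX (B H s : R) : R :=
  B * H * (cos (H * s) - B) * (1 - B * cos (H * s)) / sqrt (D B H s) ^ 3.
Definition Q (B H s : R) : R := B * sin (H * s) / (1 - B * cos (H * s)).
Definition dQ (B H s : R) : R :=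
  B * H * (cos (H * s) - B) / (1 - B * cos (H * s)) ^ 2.
Definition G (B H s : R) : R := xcoord B H s - Q B H s * zcoord B H s.

Section Profile.

Variables B H : R.
Hypothesis hB : 0 < B < 1.
Hypothesis hH : 0 < H.

Lemma D_pos (s : R) : 0 < D B H s.
Proof. unfold D. pose proof (COS_bound (H * s)). nra. Qed.

Lemma sqrtD_pos (s : R) : 0 < sqrt (D B H s).
Proof. apply sqrt_lt_R0, D_pos. Qed.

Lemma one_minus_Bcos_pos (s : R) : 0 < 1 - B * cos (H * s).
Proof. pose proof (COS_bound (H * s)). nra. Qed.

Lemma xcoord_closed (s : R) : xcoord B H s = / H * sqrt (D B H s).
Proof. unfold xcoord, D. rewrite sin_shift_3PI2. do 2 f_equal. ring. Qed.

Lemma derivable_xcoord (s : R) : derivable_pt_lim (xcoord B H) s (dX B H s).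
Proof.
  apply is_derive_Reals.
  apply (is_derive_ext (fun s => / H * sqrt (D B H s))).
  { intros t. now rewrite xcoord_closed. }
  pose proof (D_pos s) as hD. pose proof (sqrtD_pos s).
  unfold dX, D in *. auto_derive; [lra|].
  replace (1 + B * (B * 1) + - (2 * B * cos (H * s)))
    with (1 + B ^ 2 - 2 * B * cos (H * s)) by ring.
  field. lra.
Qed.

Lemma derivable_dX (s : R) : derivable_pt_lim (dX B H) s (ddX B H s).
Proof.
  apply is_derive_Reals.
  pose proof (D_pos s) as hD. pose proof (sqrtD_pos s).
  pose proof (sqrt_sqrt _ (Rlt_le _ _ hD)) as hq.
  pose proof (sin2_cos2 (H * s)) as hsc. unfold Rsqr in hsc.
  unfold dX, ddX, D in *.
  replace (1 + B * (B * 1) + - (2 * B * cos (H * s)))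
    with (1 + B ^ 2 - 2 * B * cos (H * s)) by ring.
  auto_derive.
  { replace (1 + B * (B * 1) + - (2 * B * cos (H * s)))
      with (1 + B ^ 2 - 2 * B * cos (H * s)) by ring.
    repeat split; lra. }
  replace (1 + B * (B * 1) + - (2 * B * cos (H * s)))
    with (1 + B ^ 2 - 2 * B * cos (H * s)) by ring.
  set (q := sqrt (1 + B ^ 2 - 2 * B * cos (H * s))) in *.
  assert (hs2 : sin (H * s) * sin (H * s) = 1 - cos (H * s) * cos (H * s)) by lra.
  field [hq hs2]. lra.
Qed.

Lemma zintegrand_continuous (t : R) : continuous (zintegrand B H) t.
Proof.
  apply (ex_derive_continuous (K := R_AbsRing) (V := R_NormedModule)).
  unfold zintegrand. pose proof (SIN_bound (H * t)).
  assert (0 < 1 + B * (B * 1) + 2 * B * sin (H * t)) by nra.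
  auto_derive. repeat split; [lra | apply Rgt_not_eq, sqrt_lt_R0; lra].
Qed.

Lemma derivable_zcoord (s : R) : derivable_pt_lim (zcoord B H) s (dZ B H s).
Proof.
  set (c := 3 * PI / (2 * H)).
  replace (dZ B H s) with (zintegrand B H (s + c)).
  - apply derivable_shifted_integral, zintegrand_continuous.
  - unfold zintegrand, dZ, D.
    replace (H * (s + c)) with (H * s + 3 * PI / 2) by (unfold c; field; lra).
    rewrite sin_shift_3PI2. f_equal; [ring | f_equal; ring].
Qed.

Lemma derivable_Q (s : R) : derivable_pt_lim (Q B H) s (dQ B H s).
Proof.
  apply is_derive_Reals. unfold Q, dQ.
  pose proof (one_minus_Bcos_pos s).
  pose proof (sin2_cos2 (H * s)) as hsc. unfold Rsqr in hsc.
  auto_derive; [lra|].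
  assert (hs2 : sin (H * s) * sin (H * s) = 1 - cos (H * s) * cos (H * s)) by lra.
  field [hs2]. lra.
Qed.

Lemma arc_length (s : R) : dX B H s ^ 2 + dZ B H s ^ 2 = 1.
Proof.
  pose proof (D_pos s) as hD. pose proof (sqrtD_pos s).
  pose proof (sqrt_sqrt _ (Rlt_le _ _ hD)) as hq.
  pose proof (sin2_cos2 (H * s)) as hsc. unfold Rsqr in hsc.
  unfold dX, dZ, D in *.
  set (q := sqrt (1 + B ^ 2 - 2 * B * cos (H * s))) in *.
  assert (hs2 : sin (H * s) * sin (H * s) = 1 - cos (H * s) * cos (H * s)) by lra.
  field [hq hs2]. lra.
Qed.

Lemma dZ_pos (s : R) : 0 < dZ B H s.
Proof.
  apply Rdiv_lt_0_compat; [apply one_minus_Bcos_pos | apply sqrtD_pos].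
Qed.

Lemma dX_eq_Q_dZ (s : R) : dX B H s = Q B H s * dZ B H s.
Proof.
  pose proof (sqrtD_pos s). pose proof (one_minus_Bcos_pos s).
  unfold dX, dZ, Q. field. lra.
Qed.

Lemma derivable_G (s : R) :
  derivable_pt_lim (G B H) s (- dQ B H s * zcoord B H s).
Proof.
  apply derivable_envelope with (dx := dX B H s) (dz := dZ B H s).
  - apply derivable_xcoord.
  - apply derivable_zcoord.
  - apply derivable_Q.
  - apply dX_eq_Q_dZ.
Qed.

Lemma zcoord_0 : zcoord B H 0 = 0.
Proof.
  unfold zcoord. rewrite Rplus_0_l, RInt_of_continuous.
  - apply (RInt_point (V := R_CompleteNormedModule)).
  - apply zintegrand_continuous.
Qed.

Lemma zcoord_sign (s : R) : (0 < s -> 0 < zcoord B H s) /\ (s < 0 -> zcoord B H s < 0).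
Proof.
  apply (sign_of_increasing_through_zero _ (dZ B H)).
  - apply derivable_zcoord.
  - apply dZ_pos.
  - apply zcoord_0.
Qed.

Lemma H_s0 : H * s0 B H = acos B.
Proof. unfold s0. field. lra. Qed.

Lemma cos_H_s0 : cos (H * s0 B H) = B.
Proof. rewrite H_s0. apply cos_acos. lra. Qed.

Lemma s0_pos : 0 < s0 B H.
Proof.
  pose proof (acos_bound_lt B ltac:(lra)).
  unfold s0. apply Rdiv_lt_0_compat; lra.
Qed.

Lemma cos_gt_B (s : R) : - s0 B H < s < s0 B H -> B < cos (H * s).
Proof.
  intros hs.
  pose proof (acos_bound_lt B ltac:(lra)) as hA.
  assert (hHs : - acos B < H * s < acos B).
  { rewrite <- H_s0. split; nra. }
  assert (E : cos (acos B) = B) by (apply cos_acos; lra).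
  rewrite <- E at 1.
  destruct (Rle_or_lt 0 s).
  - apply cos_decreasing_1; nra.
  - rewrite <- (cos_neg (H * s)). apply cos_decreasing_1; nra.
Qed.

Lemma dQ_pos (s : R) : - s0 B H < s < s0 B H -> 0 < dQ B H s.
Proof.
  intros hs. pose proof (cos_gt_B s hs). pose proof (one_minus_Bcos_pos s).
  unfold dQ. apply Rdiv_lt_0_compat; [|apply pow_lt; lra].
  apply Rmult_lt_0_compat; [apply Rmult_lt_0_compat|]; lra.
Qed.

Lemma dQ_s0 : dQ B H (s0 B H) = 0.
Proof. unfold dQ. rewrite cos_H_s0. unfold Rdiv. ring. Qed.

Lemma ddX_s0 : ddX B H (s0 B H) = 0.
Proof. unfold ddX. rewrite cos_H_s0. unfold Rdiv. ring. Qed.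

Lemma ddX_pos (s : R) : 0 < s < s0 B H -> 0 < ddX B H s.
Proof.
  intros hs.
  assert (hc : B < cos (H * s)) by (apply cos_gt_B; lra).
  pose proof (one_minus_Bcos_pos s). pose proof (sqrtD_pos s).
  unfold ddX. apply Rdiv_lt_0_compat; [|now apply pow_lt].
  apply Rmult_lt_0_compat; [|lra].
  apply Rmult_lt_0_compat; [apply Rmult_lt_0_compat|]; lra.
Qed.

Lemma G_0 : G B H 0 = (1 - B) / H.
Proof.
  unfold G. rewrite zcoord_0, xcoord_closed. unfold D.
  rewrite Rmult_0_r, cos_0.
  replace (1 + B ^ 2 - 2 * B * 1) with ((1 - B) ^ 2) by ring.
  rewrite sqrt_pow2 by lra. field. lra.
Qed.

Lemma G_increasing (a b : R) :
  - s0 B H < a -> a < b -> b < 0 -> G B H a < G B H b.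
Proof.
  apply (strictly_increasing_on _ (fun s => - dQ B H s * zcoord B H s) (- s0 B H) 0).
  - intros s _. apply derivable_G.
  - intros s hs. pose proof (dQ_pos s ltac:(pose proof s0_pos; lra)).
    pose proof (proj2 (zcoord_sign s) ltac:(lra)). nra.
Qed.

Lemma G_decreasing (a b : R) :
  0 < a -> a < b -> b < s0 B H -> G B H b < G B H a.
Proof.
  apply (strictly_decreasing_on _ (fun s => - dQ B H s * zcoord B H s) 0 (s0 B H)).
  - intros s _. apply derivable_G.
  - intros s hs. pose proof (dQ_pos s ltac:(lra)).
    pose proof (proj1 (zcoord_sign s) ltac:(lra)). nra.
Qed.

Lemma gfun_closed : gfun B H (dX B H) (dZ B H) = G B H.
Proof.
  apply functional_extensionality. intros s.
  pose proof (sqrtD_pos s). pose proof (one_minus_Bcos_pos s).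
  unfold gfun, G, dX, dZ, Q. f_equal. f_equal. field. lra.
Qed.

End Profile.

Theorem lemma3p3 (B H : R) (hB : 0 < B < 1) (hH : 0 < H) :
  (* x, z and x' are differentiable everywhere *)
  (exists dx dz ddx : R -> R,
     (forall s, derivable_pt_lim (xcoord B H) s (dx s)) /\
     (forall s, derivable_pt_lim (zcoord B H) s (dz s)) /\
     (forall s, derivable_pt_lim dx s (ddx s))) /\
  (forall dx dz ddx : R -> R,
     (forall s, derivable_pt_lim (xcoord B H) s (dx s)) ->
     (forall s, derivable_pt_lim (zcoord B H) s (dz s)) ->
     (forall s, derivable_pt_lim dx s (ddx s)) ->
     (* arc length parametrization and z' > 0 *)
     (forall s, dx s ^ 2 + dz s ^ 2 = 1) /\
     (forall s, 0 < dz s) /\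
     (* s0 is the smallest positive zero of x'', and cos(H s0) = B *)
     (0 < s0 B H /\ ddx (s0 B H) = 0 /\ (forall s, 0 < s < s0 B H -> ddx s <> 0) /\
      cos (H * s0 B H) = B) /\
     (* (i) *)
     (gfun B H dx dz 0 = (1 - B) / H /\ 0 < (1 - B) / H) /\
     (* (ii) *)
     (derivable_pt_lim (gfun B H dx dz) 0 0 /\
      derivable_pt_lim (gfun B H dx dz) (s0 B H) 0) /\
     (* (iii) *)
     (forall a b, - s0 B H < a -> a < b -> b < 0 ->
        gfun B H dx dz a < gfun B H dx dz b) /\
     (forall a b, 0 < a -> a < b -> b < s0 B H ->
        gfun B H dx dz b < gfun B H dx dz a)).
Proof.
  split.
  { exists (dX B H), (dZ B H), (ddX B H).
    repeat split; intros s;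
      [apply derivable_xcoord | apply derivable_zcoord | apply derivable_dX]; auto. }
  intros dx dz ddx hx hz hxx.
  assert (dx = dX B H) by (apply (derivative_fun_unique (xcoord B H)); auto using derivable_xcoord).
  assert (dz = dZ B H) by (apply (derivative_fun_unique (zcoord B H)); auto using derivable_zcoord).
  subst dx dz.
  assert (ddx = ddX B H) by (apply (derivative_fun_unique (dX B H)); auto using derivable_dX).
  subst ddx.
  rewrite gfun_closed by auto.
  (* g' = - Q' z vanishes at 0 (z(0) = 0) and at s0 (Q'(s0) = 0). *)
  assert (hG0 := derivable_G B H ltac:(lra) ltac:(lra) 0).
  rewrite zcoord_0, Rmult_0_r in hG0 by auto.
  assert (hGs0 := derivable_G B H ltac:(lra) ltac:(lra) (s0 B H)).
  rewrite dQ_s0, Ropp_0, Rmult_0_l in hGs0 by auto.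
  repeat split; auto using arc_length, dZ_pos, s0_pos, ddX_s0, cos_H_s0, G_0,
    G_increasing, G_decreasing.
  - intros s hs. apply Rgt_not_eq, ddX_pos; auto.
  - apply Rdiv_lt_0_compat; lra.
Qed.
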